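(* Assume the following setup. Let $a,x,u,v$ be integers with $3\le a\le x$, $0\le u\le a-3$, and $u+2\le v\le\min\left(a-1,\frac{a(x-1)}{x}\right)$. Let $\lambda$ consist of $ua+v$ parts equal to $x$ and $v-(u+1)$ parts equal to $ax$, and let $n=|\lambda|$, so that $n=x[(a+1)(v-1)+1]$ and $n-1=xa(v-1)+xv-1$. For $0\le i\le n-2$ write uniquely $i=\frac{n}{x}r_i+(v-1)p_i+q_i$ with integers $0\le r_i<x$, $0\le p_i<a+2$, $0\le q_i<v-1$, $0\le (v-1)p_i+q_i<n/x$. Define \[ s_{2,i}=iax-(n-1)\left\lfloor\frac{iax}{n-1}\right\rfloor,\qquad f(i)=ar_i-(xv-1)p_i+xaq_i, \] and for an integer $k$ let $F_k=\left\{i\in\{1,\dots,n-2\}: k=-\left\lfloor \frac{f(i)}{n-1}\right\rfloor\right\}$. If $i\in F_k$, then $s_{2,i}=f(i)+k(n-1)$. *)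

From Stdlib Require Import ZArith List.
Open Scope Z_scope.

Definition lam (a x u v : Z) : list Z :=
  repeat x (Z.to_nat (u * a + v)) ++ repeat (a * x) (Z.to_nat (v - (u + 1))).

Definition size_lam (a x u v : Z) : Z := fold_right Z.add 0 (lam a x u v).

Definition s2 (a x n i : Z) : Z := i * a * x - (n - 1) * ((i * a * x) / (n - 1)).

Definition fF (a x v r p q : Z) : Z := a * r - (x * v - 1) * p + x * a * q.

(* Write [n = x N] with [N = (a+1)(v-1)+1], so that [n - 1 = x a (v-1) + x v - 1].
   Expanding [i = N r + (v-1) p + q] gives [i a x = f(i) + (a r + p)(n-1)], hence
   [i a x] and [f(i)] have the same residue modulo [n-1].  Since [s_{2,i}] is that
   residue of [i a x] and [f(i) + k(n-1)] with [k = -floor(f(i)/(n-1))] is that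
   residue of [f(i)], the two agree.
   *)
From Stdlib Require Import ZArith List Lia.
Open Scope Z_scope.

Lemma sum_app (l1 l2 : list Z) :
  fold_right Z.add 0 (l1 ++ l2) = fold_right Z.add 0 l1 + fold_right Z.add 0 l2.
Proof. induction l1 as [|c l1 IH]; simpl; lia. Qed.

Lemma sum_repeat (c : Z) (m : nat) : fold_right Z.add 0 (repeat c m) = Z.of_nat m * c.
Proof.
  induction m as [|m IH]; [reflexivity|].
  cbn [repeat fold_right]. rewrite IH, Nat2Z.inj_succ. ring.
Qed.

Lemma size_lam_eq (a x u v : Z) :
  0 <= a -> 0 <= u -> u + 2 <= v ->
  size_lam a x u v = x * ((a + 1) * (v - 1) + 1).
Proof.
  intros. unfold size_lam, lam.
  rewrite sum_app, !sum_repeat, !Z2Nat.id by nia. ring.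
Qed.

Lemma s2_mod (a x n i : Z) : n - 1 <> 0 -> s2 a x n i = (i * a * x) mod (n - 1).
Proof. intros Hn. unfold s2. rewrite Z.mod_eq by exact Hn. reflexivity. Qed.

Lemma mod_opp_div (m b : Z) : b <> 0 -> m mod b = m + - (m / b) * b.
Proof. intros Hb. rewrite Z.mod_eq by exact Hb. ring. Qed.

Lemma mul_ax_decomp (a x v r p q : Z) :
  (((a + 1) * (v - 1) + 1) * r + (v - 1) * p + q) * a * x
  = fF a x v r p q + (a * r + p) * (x * ((a + 1) * (v - 1) + 1) - 1).
Proof. unfold fF. ring. Qed.

Theorem lemma4p6 (a x u v : Z)
  (ha : 3 <= a) (hax : a <= x) (hu0 : 0 <= u) (hu : u <= a - 3)
  (hv1 : u + 2 <= v) (hv2 : v <= a - 1) (hv3 : v * x <= a * (x - 1))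
  (i r p q k : Z)
  (hi : 1 <= i <= size_lam a x u v - 2)
  (hdec : i = (size_lam a x u v / x) * r + (v - 1) * p + q)
  (hr : 0 <= r < x) (hp : 0 <= p < a + 2) (hq : 0 <= q < v - 1)
  (hpq : 0 <= (v - 1) * p + q < size_lam a x u v / x)
  (hk : k = - (fF a x v r p q / (size_lam a x u v - 1))) :
  s2 a x (size_lam a x u v) i = fF a x v r p q + k * (size_lam a x u v - 1).
Proof.
  rewrite size_lam_eq in * by lia.
  rewrite (Z.mul_comm x), Z.div_mul in hdec by lia. subst i k.
  assert (Hn1 : x * ((a + 1) * (v - 1) + 1) - 1 <> 0) by nia.
  rewrite s2_mod, mul_ax_decomp, Z_mod_plus_full by exact Hn1.
  apply mod_opp_div, Hn1.
Qed.
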